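(* Let $\mathit{LR}$ be the graded dual Hopf algebra of $\mathcal{Y}Sym$ and $\{M^*_t\}$ the basis dual to $\{M_t\}$. Then $\mathit{LR}$ is the free associative algebra generated by $\{M^*_t: t\text{ progressive}\}$, and $M^*_s\cdot M^*_t=M^*_{s\backslash t}$ for all trees $s,t$.
   Context: $\mathcal{Y}_n$ = rooted planar binary trees with $n$ internal nodes, $\mathcal{Y}_0=\{|\}$; $s\vee t$ = tree whose root has left subtree $s$ and right subtree $t$; $t=t_l\vee t_r$ uniquely for $t\ne|$. Tamari order on $\mathcal{Y}_n$: generated by replacing a subtree $(a\vee b)\vee c$ by the larger $a\vee(b\vee c)$. $|\backslash t=t$, $s\backslash t=s_l\vee(s_r\backslash t)$. A tree $t\ne|$ is progressive if $t_r=|$. $\mathcal{Y}Sym$ is the graded connected Hopf algebra over $\mathbb{Q}$ with basis $F_t$ ($t\in\bigsqcup_n\mathcal{Y}_n$, degree $n$ for $t\in\mathcal{Y}_n$). Leaves of $t\in\mathcal{Y}_p$ are numbered $0..p$; splitting at leaf $i$, $t\to(t_0,t_1)$: $|\to(|,|)$; for $t=t_l\vee t_r$, $t\to(a,b\vee t_r)$ if leaf $i$ is in $t_l$ and $t_l\to(a,b)$ there, $t\to(t_l\vee c,d)$ if in $t_r$ and $t_r\to(c,d)$. $\Delta(F_t)=\sum_iF_{t_0}\otimes F_{t_1}$. For $s\in\mathcal{Y}_q$: $F_t\cdot F_s=\sum F_{(t_0,\dots,t_q)/s}$ over multisets $i_1\le\dots\le i_q$ of leaves of $t$, where the division $t\to(t_0,\dots,t_q)$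 splits $t$ at $i_q$ into $(t',t_q)$ then divides $t'$ at $i_1,..,i_{q-1}$, and $(t_0,..,t_q)/s$ grafts the root of $t_i$ on the $i$-th leaf ($0\le i\le q$) of $s$. $M_t=\sum_{t\le s}\mu_{\mathcal{Y}_n}(t,s)F_s$ (Möbius function of Tamari order). The product of $\mathit{LR}$ is dual to the coproduct of $\mathcal{Y}Sym$ and vice versa. *)

From HB Require Import structures.
From mathcomp Require Import all_boot all_order all_algebra.
Set Implicit Arguments. Unset Strict Implicit. Unset Printing Implicit Defensive.
Import Order.TTheory GRing.Theory Num.Theory.
Local Open Scope ring_scope.

(* Rooted planar binary trees; Leaf = |, Node s t = s \/ t. *)
Inductive tree := Leaf | Node of tree & tree.

Fixpoint eqtree (s t : tree) : bool :=
  match s, t with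
  | Leaf, Leaf => true
  | Node a b, Node c d => eqtree a c && eqtree b d
  | _, _ => false
  end.

Lemma eqtreeP : Equality.axiom eqtree.
Proof.
elim=> [|a IHa b IHb] [|c d] /=; try by constructor.
case: (IHa c) => [->|h]; last by constructor; case.
case: (IHb d) => [->|h]; last by constructor; case.
by constructor.
Qed.

HB.instance Definition _ := hasDecEq.Build tree eqtreeP.

(* number of internal nodes: t \in Y_n iff nodes t = n *)
Fixpoint nodes (t : tree) : nat :=
  match t with Leaf => 0%N | Node l r => (nodes l + nodes r).+1 end.

(* Enumeration of Y_0, ..., Y_n *)
Fixpoint treesL (n : nat) : seq (seq tree) :=
  match n with
  | 0 => [:: [:: Leaf]]
  | n'.+1 =>
      let L := treesL n' in
      rcons L (flatten [seq [seq Node a b | a <- nth [::] L i, b <- nth [::] L (n' - i)]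
                       | i <- iota 0 n'.+1])
  end.

Definition trees (n : nat) : seq tree := nth [::] (treesL n) n.

Fixpoint rots (t : tree) : seq tree :=
  match t with
  | Leaf => [::]
  | Node l r =>
      (match l with Node a b => [:: Node a (Node b r)] | Leaf => [::] end)
      ++ [seq Node l' r | l' <- rots l] ++ [seq Node l r' | r' <- rots r]
  end.

(* trees reachable from t by at most #|Y_n| rotations (= all reachable ones) *)
Definition reach (t : tree) : seq tree :=
  iter (size (trees (nodes t)))
       (fun l => undup (l ++ flatten (map rots l))) [:: t].

(* Tamari order: reflexive-transitive closure of the rotation relation *)
Definition tle (t s : tree) : bool := s \in reach t.

(* Moebius function of the Tamari order: mu(t,t) = 1,
   mu(t,s) = - sum_{t <= r < s} mu(t,r) for t < s, and 0 otherwise.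
   The fuel k bounds the length of chains, which is < #|Y_n|. *)
Fixpoint mu_f (k : nat) (t s : tree) : rat :=
  if s == t then 1 else
  match k with
  | 0 => 0
  | k'.+1 =>
      if tle t s then
        - \sum_(r <- trees (nodes t) | tle t r && tle r s && (r != s)) mu_f k' t r
      else 0
  end.

Definition mu (t s : tree) : rat := mu_f (size (trees (nodes t))) t s.

(* Elements of YSym as finite formal combinations  sum c * F_s  *)
Definition ysym := seq (rat * tree).

Definition Mbasis (t : tree) : ysym :=
  [seq (mu t s, s) | s <- trees (nodes t) & tle t s].

(* Linear functionals on YSym, given by their values on the F-basis:
   f s = <f, F_s>.  The graded dual LR consists of the finitely supported ones. *)
Definition functional := tree -> rat.

Definition pairing (f : functional) (x : ysym) : rat := \sum_(p <- x) p.1 * f p.2.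

Definition finsupp (f : functional) : Prop :=
  exists n : nat, forall s, (n < nodes s)%N -> f s = 0.

(* Splitting t at leaf i (leaves numbered 0..nodes t) *)
Fixpoint tsplit (t : tree) (i : nat) : tree * tree :=
  match t with
  | Leaf => (Leaf, Leaf)
  | Node l r =>
      if (i < (nodes l).+1)%N then
        let ab := tsplit l i in (ab.1, Node ab.2 r)
      else
        let cd := tsplit r (i - (nodes l).+1) in (Node l cd.1, cd.2)
  end.

(* Product of LR, dual to the coproduct Delta(F_t) = sum_i F_{t_0} (x) F_{t_1}:
   <f g, F_s> = <f (x) g, Delta F_s>. *)
Definition LRmul (f g : functional) : functional :=
  fun s => \sum_(i < (nodes s).+1) f (tsplit s i).1 * g (tsplit s i).2.

(* unit of LR: the counit of YSym, i.e. F*_| *)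
Definition LRone : functional := fun s => if s == Leaf then 1 else 0.

Fixpoint under (s t : tree) : tree :=
  match s with Leaf => t | Node l r => Node l (under r t) end.

Definition progressive (t : tree) : bool :=
  match t with Node _ Leaf => true | _ => false end.

Definition Mdual (Ms : tree -> functional) : Prop :=
  forall t u, pairing (Ms t) (Mbasis u) = (t == u)%:R.

Definition monomial (Ms : tree -> functional) (w : seq tree) : functional :=
  foldr (fun t acc => LRmul (Ms t) acc) LRone w.

From mathcomp Require Import all_boot all_order all_algebra.
From mathcomp Require Import zify.
Set Implicit Arguments. Unset Strict Implicit. Unset Printing Implicit Defensive.
Import GRing.Theory.

(* Since M_t = sum_(t <= s) mu(t,s) F_s, Moebius inversion gives
   <M*_t, F_s> = [s <= t]; the pairing of a functional with the M-basis is
   unitriangular for the Tamari order, so this determines M*_t, and a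
   functional is the combination of the M*_x with coefficients <f, M_x>.
   Splitting at leaf |s| is monotone for the Tamari order, and u <= u_0 \ u_1
   for its two pieces, hence u <= s \ t iff u_0 <= s and u_1 <= t: this is
   M*_s M*_t = M*_(s\t).  Every tree is uniquely s_1 \ (s_2 \ ... s_k) with
   progressive s_i (cut along the right branch), so the monomials in
   progressive generators are exactly the M*_t. *)

Lemma size_treesL n : size (treesL n) = n.+1.
Proof. by elim: n => //= n IH; rewrite size_rcons IH. Qed.

Lemma nth_treesL n i : i <= n -> nth [::] (treesL n) i = trees i.
Proof.
elim: n i => [|n IH] i; first by rewrite leqn0 => /eqP ->.
rewrite leq_eqVlt => /orP [/eqP -> //| lt].
by rewrite /= nth_rcons size_treesL lt IH.
Qed.

Lemma treesS n : trees n.+1 =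
  flatten [seq [seq Node a b | a <- trees i, b <- trees (n - i)] | i <- iota 0 n.+1].
Proof.
rewrite {1}/trees -[treesL n.+1]/(rcons (treesL n) _) nth_rcons size_treesL ltnn eqxx.
congr flatten; apply/eq_in_map => i; rewrite mem_iota add0n ltnS => le_in.
by rewrite !nth_treesL // leq_subr.
Qed.

Lemma mem_trees n t : (t \in trees n) = (nodes t == n).
Proof.
apply/idP/eqP => [|<-]; last first.
  elim: t => [|a IHa b IHb] /=; first by rewrite /trees /= inE.
  rewrite treesS; apply/flatten_mapP; exists (nodes a); first by rewrite mem_iota; lia.
  by rewrite addKn; apply: allpairs_f.
elim/ltn_ind: n t => -[|n] IH t; first by rewrite /trees /= inE => /eqP ->.
rewrite treesS => /flatten_mapP [i]; rewrite mem_iota add0n ltnS => le_in.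
case/allpairsP => [[a b] /= [ha hb ->]] /=.
by rewrite (IH i _ _ ha) ?(IH (n - i) _ _ hb); lia.
Qed.

Lemma uniq_flatten_key (T : eqType) (F : nat -> seq T) (key : T -> nat) m k :
  (forall i, i < m + k -> uniq (F i)) -> (forall i x, x \in F i -> key x = i) ->
  uniq (flatten [seq F i | i <- iota m k]).
Proof.
elim: k m => [|k IH] m uF kF //=.
rewrite cat_uniq uF ?IH //; try (move=> i ?; apply: uF; lia); last lia.
rewrite andbT; apply/hasPn => x /flatten_mapP [i].
rewrite mem_iota => /andP [lt _] /kF kx; apply/negP => /kF; lia.
Qed.

Lemma trees_uniq n : uniq (trees n).
Proof.
elim/ltn_ind: n => -[|n] IH //.
rewrite treesS; apply: (@uniq_flatten_key _ _ (fun t => if t is Node a _ then nodes a else 0)).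
- move=> i lein; apply: allpairs_uniq; [apply: IH; lia | apply: IH; lia |].
  by move=> [a b] [c d] _ _ /= [-> ->].
- by move=> i x /allpairsP [[a b] /= [ha _ ->]]; apply/eqP; rewrite -mem_trees.
Qed.

Section Saturation.
Variables (T : eqType) (next : T -> seq T).

Definition saturate (l : seq T) := undup (l ++ flatten (map next l)).

Definition next_closed (l : seq T) := forall x y, x \in l -> y \in next x -> y \in l.

Lemma mem_saturate l x : (x \in saturate l) = (x \in l) || has (fun y => x \in next y) l.
Proof.
rewrite mem_undup mem_cat; congr orb.
by apply/flatten_mapP/hasP => -[y hy hx]; exists y.
Qed.

Lemma saturate_sub l : {subset l <= saturate l}.
Proof. by move=> x hx; rewrite mem_saturate hx. Qed.

Lemma saturate_id l : next_closed l -> saturate l =i l.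
Proof.
move=> cl x; apply/idP/idP; last exact: saturate_sub.
by rewrite mem_saturate => /orP [//| /hasP [y hy /(cl _ _ hy)]].
Qed.

Lemma saturate_closed_or_grows l :
  uniq l -> next_closed (saturate l) \/ size l < size (saturate l).
Proof.
move=> ul; case: (leqP (size (saturate l)) (size l)) => hs; last by right.
have [_ eq_l] := uniq_min_size ul (@saturate_sub l) hs.
have cl : next_closed l.
  by move=> x y hx hy; rewrite eq_l mem_saturate; apply/orP; right; apply/hasP; exists x.
by left => x y; rewrite !(saturate_id cl); apply: cl.
Qed.

Lemma iter_saturate_sub k l : {subset l <= iter k saturate l}.
Proof. by elim: k => // k IH x /IH; rewrite iterS; apply: saturate_sub. Qed.

Lemma iter_saturate_ind (P : T -> Prop) k l :
  (forall x, x \in l -> P x) -> (forall x y, P x -> y \in next x -> P y) ->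
  forall x, x \in iter k saturate l -> P x.
Proof.
move=> Pl cl; elim: k => [|k IH] x; first exact: Pl.
by rewrite iterS mem_saturate => /orP [/IH //| /hasP [y /IH hy /(cl _ _ hy)]].
Qed.

(* A strictly growing duplicate-free list inside [U] stops growing before [size U] steps. *)
Lemma iter_saturate_closed U k l : uniq l -> {subset l <= U} -> next_closed U ->
  size U < k + size l -> next_closed (iter k saturate l).
Proof.
move=> ul lU clU hk.
have uniq_iter j : uniq (iter j saturate l) by case: j => // j; apply: undup_uniq.
have closed_or_large j :
    next_closed (iter j saturate l) \/ j + size l <= size (iter j saturate l).
  elim: j => [|j [cl | large]]; first by right.
  - by left => x y; rewrite iterS !(saturate_id cl); apply: cl.
  - by rewrite iterS; case: (saturate_closed_or_grows (uniq_iter j)); [left | right; lia].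
case: (closed_or_large k) => // large.
have iterU : {subset iter k saturate l <= U}.
  by apply: iter_saturate_ind => [x /lU | x y /clU]; apply.
by have := uniq_leq_size (uniq_iter k) iterU; lia.
Qed.

End Saturation.

Lemma rotsP l r x : x \in rots (Node l r) ->
  [\/ exists a b, l = Node a b /\ x = Node a (Node b r),
      exists2 l', l' \in rots l & x = Node l' r
    | exists2 r', r' \in rots r & x = Node l r'].
Proof.
rewrite /= !mem_cat => /orP [|/orP [] /mapP [y hy ->]].
- by case: l => // a b; rewrite inE => /eqP ->; apply: Or31; exists a, b.
- by apply: Or32; exists y.
- by apply: Or33; exists y.
Qed.

Lemma rots_Nl l l' r : l' \in rots l -> Node l' r \in rots (Node l r).
Proof. by move=> h; rewrite /= !mem_cat (map_f (fun x => Node x r) h) orbT. Qed.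

Lemma rots_Nr l r r' : r' \in rots r -> Node l r' \in rots (Node l r).
Proof. by move=> h; rewrite /= !mem_cat (map_f (fun x => Node l x) h) !orbT. Qed.

Lemma rots_root a b c : Node a (Node b c) \in rots (Node (Node a b) c).
Proof. by rewrite /= inE eqxx. Qed.

Lemma rots_nodes x y : y \in rots x -> nodes y = nodes x.
Proof.
elim: x y => // l IHl r IHr y.
by case/rotsP => [[a [b [-> ->]]] | [l' /IHl ? ->] | [r' /IHr ? ->]] /=; lia.
Qed.

(* The sum over internal nodes of the size of their right subtree: a rotation
   (a \/ b) \/ c -> a \/ (b \/ c) raises it by [nodes c + 1]. *)
Fixpoint right_weight (t : tree) : nat :=
  if t is Node l r then right_weight l + right_weight r + nodes r else 0.

Lemma rots_right_weight x y : y \in rots x -> right_weight x < right_weight y.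
Proof.
elim: x y => // l IHl r IHr y.
case/rotsP => [[a [b [-> ->]]] | [l' /IHl ? ->] | [r' hr ->]] /=; try lia.
by have := IHr _ hr; rewrite (rots_nodes hr); lia.
Qed.

Lemma right_weight_le t : right_weight t <= nodes t * nodes t.
Proof. by elim: t => //= l IHl r IHr; nia. Qed.

Lemma reach_closed t : next_closed rots (reach t).
Proof.
apply: (@iter_saturate_closed _ _ (trees (nodes t))) => //.
- by move=> x; rewrite inE mem_trees => /eqP ->.
- by move=> x y; rewrite !mem_trees => /eqP <- /rots_nodes ->.
- by rewrite addn1.
Qed.

Lemma tle_refl t : tle t t.
Proof. by apply: iter_saturate_sub; rewrite inE. Qed.

Lemma tle_ind (P : tree -> Prop) t s :
  P t -> (forall x y, P x -> y \in rots x -> P y) -> tle t s -> P s.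
Proof.
move=> Pt cl; apply: iter_saturate_ind cl s => x.
by rewrite inE => /eqP ->.
Qed.

Lemma tle_rot x y : y \in rots x -> tle x y.
Proof. exact: reach_closed (tle_refl x). Qed.

Lemma tle_trans t s r : tle t s -> tle s r -> tle t r.
Proof. by move=> ts; apply: (tle_ind (P := tle t)) => // x y; apply: reach_closed. Qed.

Lemma tle_nodes t s : tle t s -> nodes s = nodes t.
Proof. by apply: (tle_ind (P := fun y => nodes y = nodes t)) => // x y <- /rots_nodes. Qed.

Lemma tle_right_weight t s : tle t s -> s = t \/ right_weight t < right_weight s.
Proof.
apply: (tle_ind (P := fun y => y = t \/ right_weight t < right_weight y)); first by left.
by move=> x y hx /rots_right_weight; case: hx => [-> | ?]; right; lia.
Qed.

Lemma tle_anti t s : tle t s -> tle s t -> s = t.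
Proof. by move=> /tle_right_weight [//|?] /tle_right_weight [->//|?]; lia. Qed.

Lemma tle_leaf s : tle s Leaf = (s == Leaf).
Proof.
apply/idP/eqP => [|->]; last exact: tle_refl.
by case: s => // l r /tle_nodes.
Qed.

Lemma tamari_down_ind (P : tree -> Prop) :
  (forall x, (forall s, tle x s -> s != x -> P s) -> P x) -> forall x, P x.
Proof.
move=> IH x; have [k hk] := ubnP (nodes x * nodes x - right_weight x).
elim: k x hk => // k IHk x hx; apply: IH => s xs /eqP ns; apply: IHk.
have := right_weight_le s; rewrite (tle_nodes xs).
by case: (tle_right_weight xs) => // ?; lia.
Qed.

Lemma tle_context (G : tree -> tree) x y :
  (forall a b, b \in rots a -> tle (G a) (G b)) -> tle x y -> tle (G x) (G y).
Proof.
move=> hG; apply: (tle_ind (P := fun y => tle (G x) (G y))); first exact: tle_refl.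
by move=> a b xa /hG; apply: tle_trans.
Qed.

Lemma tle_Nl l l' r : tle l l' -> tle (Node l r) (Node l' r).
Proof. by apply: (tle_context (G := Node^~ r)) => a b /rots_Nl /tle_rot. Qed.

Lemma tle_Nr l r r' : tle r r' -> tle (Node l r) (Node l r').
Proof. by apply: (tle_context (G := Node l)) => a b /rots_Nr /tle_rot. Qed.

Lemma tle_under_l x x' t : tle x x' -> tle (under x t) (under x' t).
Proof.
apply: (tle_context (G := under^~ t)) => a b hab; apply: tle_rot.
elim: a b hab => // l IHl r IHr b.
case/rotsP => [[a [c [-> ->]]] | [l' h ->] | [r' /IHr h ->]] /=.
- exact: rots_root.
- exact: rots_Nl.
- exact: rots_Nr.
Qed.

Lemma tle_under_r s y y' : tle y y' -> tle (under s y) (under s y').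
Proof.
apply: (tle_context (G := under s)) => a b /tle_rot hab.
by elim: s => //= l _ r; apply: tle_Nr.
Qed.

Lemma nodes_under s t : nodes (under s t) = nodes s + nodes t.
Proof. by elim: s => //= l _ r ->; lia. Qed.

Lemma nodes_tsplit1 u i : i <= nodes u -> nodes (tsplit u i).1 = i.
Proof.
elim: u i => [|l IHl r IHr] i /=; first by rewrite leqn0 => /eqP ->.
by move=> hi; case: ifP => h /=; [rewrite IHl | rewrite IHr]; lia.
Qed.

Lemma tsplit0 t : tsplit t 0 = (Leaf, t).
Proof. by elim: t => //= l IHl r _; rewrite IHl. Qed.

Lemma tsplit_under s t : tsplit (under s t) (nodes s) = (s, t).
Proof.
elim: s => [|l _ r IH] /=; first exact: tsplit0.
by rewrite ifN ?subSS ?addKn ?IH // -leqNgt; lia.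
Qed.

Lemma tle_Node_under a b r : tle (Node (under a b) r) (under a (Node b r)).
Proof.
elim: a => [|x _ y IH] /=; first exact: tle_refl.
exact: tle_trans (tle_rot (rots_root _ _ _)) (tle_Nr _ IH).
Qed.

Lemma tle_under_tsplit u i : tle u (under (tsplit u i).1 (tsplit u i).2).
Proof.
elim: u i => [|l IHl r IHr] i /=; first exact: tle_refl.
case: ifP => _ /=; last exact/tle_Nr/IHr.
exact: tle_trans (tle_Nl r (IHl i)) (tle_Node_under _ _ _).
Qed.

Lemma tsplit_rots x y i : y \in rots x ->
  tle (tsplit x i).1 (tsplit y i).1 && tle (tsplit x i).2 (tsplit y i).2.
Proof.
elim: x y i => // l IHl r IHr y i.
case/rotsP => [[a [b [-> ->]]] | [l' h ->] | [r' h ->]] /=.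
- case: (ltnP i (nodes a).+1) => h1.
    by rewrite ifT /= ?tle_refl ?(tle_rot (rots_root _ _ _)) //; lia.
  case: (ltnP i (nodes a + nodes b).+2) => h2.
    by rewrite ifT /= ?tle_refl //; lia.
  rewrite ifN /=; last by lia.
  have -> : i - (nodes a).+1 - (nodes b).+1 = i - (nodes a + nodes b).+2 by lia.
  by rewrite tle_refl (tle_rot (rots_root _ _ _)).
- rewrite (rots_nodes h); case: ifP => _ /=.
    by case/andP: (IHl _ i h) => -> /(tle_Nl r) ->.
  by rewrite tle_refl (tle_Nl _ (tle_rot h)).
- case: ifP => _ /=; last by case/andP: (IHr _ (i - (nodes l).+1) h) => /(tle_Nr l) -> ->.
  by rewrite tle_refl (tle_Nr _ (tle_rot h)).
Qed.

Lemma tsplit_tle x y i : tle x y ->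
  tle (tsplit x i).1 (tsplit y i).1 && tle (tsplit x i).2 (tsplit y i).2.
Proof.
pose split_le y := tle (tsplit x i).1 (tsplit y i).1 && tle (tsplit x i).2 (tsplit y i).2.
apply: (tle_ind (P := split_le)); first by rewrite /split_le !tle_refl.
move=> a b /andP [h1 h2] /(tsplit_rots i) /andP [h3 h4]; rewrite /split_le.
by rewrite (tle_trans h1 h3) (tle_trans h2 h4).
Qed.

Lemma tle_under u s t :
  tle u (under s t) = tle (tsplit u (nodes s)).1 s && tle (tsplit u (nodes s)).2 t.
Proof.
apply/idP/andP => [/(tsplit_tle (nodes s)) | [h1 h2]].
  by rewrite tsplit_under => /andP.
apply: tle_trans (tle_under_tsplit u (nodes s)) _.
exact: tle_trans (tle_under_l _ h1) (tle_under_r _ h2).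
Qed.

Lemma count_subpred_lt (T : eqType) (a b : pred T) (s : seq T) x :
  subpred a b -> x \in s -> b x -> ~~ a x -> count a s < count b s.
Proof.
move=> ab; elim: s => // y s IH; rewrite inE => /orP [/eqP <- | hx] bx ax /=.
  by rewrite bx (negbTE ax) add0n add1n ltnS sub_count.
by have := IH hx bx ax; case: (boolP (a y)) => [/ab -> | _]; case: (b y); lia.
Qed.

(* The number of trees [x] with [u <= x < r]: a bound on the fuel that [mu_f]
   needs to compute [mu u r]. *)
Definition interval_count u r :=
  count (fun x => tle u x && tle x r && (x != r)) (trees (nodes u)).

Lemma interval_count_lt u x r :
  tle u x -> tle x r -> x != r -> interval_count u x < interval_count u r.
Proof.
move=> ux xr nxr; apply: (count_subpred_lt (x := x)); last by rewrite eqxx andbF.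
- move=> y /andP [/andP [uy yx] nyx]; rewrite uy (tle_trans yx xr).
  by apply: contraNneq nyx => eyr; rewrite eyr in yx *; rewrite (tle_anti xr yx).
- by rewrite mem_trees (tle_nodes ux).
- by rewrite ux xr nxr.
Qed.

Lemma interval_count_size u r : tle u r -> interval_count u r < size (trees (nodes u)).
Proof.
move=> ur; rewrite -count_predT; apply: (count_subpred_lt (x := r)) => //.
- by rewrite mem_trees (tle_nodes ur).
- by rewrite eqxx andbF.
Qed.

Lemma mu_f_refl k t : mu_f k t t = 1%R.
Proof. by case: k => [|k] /=; rewrite eqxx. Qed.

Lemma mu_f_stable u k r : interval_count u r <= k -> mu_f k u r = mu_f k.+1 u r.
Proof.
elim: k r => [|k IH] r hr; rewrite [LHS]/= [RHS]/=; case: eqP => // nru;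
  case ur: (tle u r) => //.
  have : 0 < interval_count u r.
    rewrite -has_count; apply/hasP; exists u; first by rewrite mem_trees.
    by rewrite tle_refl ur; apply/eqP => eur; apply: nru.
  by lia.
congr (- _)%R; rewrite big_seq_cond [RHS]big_seq_cond; apply: eq_bigr => x.
case/andP => _ /andP [/andP [ux xr] nxr]; apply: IH.
by have := interval_count_lt ux xr nxr; lia.
Qed.

Local Open Scope ring_scope.

Lemma mu_refl t : mu t t = 1.
Proof. exact: mu_f_refl. Qed.

Lemma mu_rec u t : tle u t -> t != u ->
  mu u t = - \sum_(r <- trees (nodes u) | tle u r && tle r t && (r != t)) mu u r.
Proof.
move=> ut ntu; rewrite /mu.
have := interval_count_size ut; case N: (size _) => [//|n] _ /=.
rewrite (negbTE ntu) ut; congr (- _).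
rewrite big_seq_cond [RHS]big_seq_cond; apply: eq_bigr => x.
case/andP => _ /andP [/andP [ux xt] nxt].
by rewrite mu_f_stable // -ltnS -N interval_count_size.
Qed.

Definition Mstar (t : tree) : functional := fun s => (tle s t)%:R.

Lemma pairingB f g x :
  pairing (fun s => f s - g s) x = pairing f x - pairing g x.
Proof. by rewrite /pairing -sumrB; apply: eq_bigr => p _; rewrite mulrBr. Qed.

Lemma pairing_sum (I : Type) (r : seq I) (d : I -> rat) (h : I -> functional) x :
  pairing (fun s => \sum_(i <- r) d i * h i s) x = \sum_(i <- r) d i * pairing (h i) x.
Proof.
rewrite /pairing; under eq_bigr do rewrite mulr_sumr.
rewrite exchange_big; apply: eq_bigr => i _.
by rewrite mulr_sumr; apply: eq_bigr => p _; rewrite mulrCA.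
Qed.

Lemma pairing_Mbasis f x : pairing f (Mbasis x) =
  f x + \sum_(s <- trees (nodes x) | tle x s && (s != x)) mu x s * f s.
Proof.
rewrite /pairing /Mbasis big_map -big_filter_cond.
rewrite (bigD1_seq x) /= ?mem_filter ?tle_refl ?mem_trees ?eqxx ?filter_uniq ?trees_uniq //.
by rewrite mu_refl mul1r big_filter_cond.
Qed.

Lemma sum_mu_interval u t : tle u t ->
  \sum_(s <- trees (nodes u) | tle u s && tle s t) mu u s = (t == u)%:R.
Proof.
move=> ut; rewrite -big_filter (bigD1_seq t) /=; first last.
- by rewrite filter_uniq // trees_uniq.
- by rewrite mem_filter ut tle_refl mem_trees (tle_nodes ut) eqxx.
rewrite big_filter_cond; case: eqP => [-> | /eqP ntu].
  rewrite mu_refl big1 ?addr0 // => s /andP [/andP [us su]].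
  by rewrite (tle_anti us su) eqxx.
by rewrite (mu_rec ut ntu) addNr.
Qed.

Lemma Mstar_dual : Mdual Mstar.
Proof.
move=> t u; rewrite /pairing /Mbasis big_map big_filter /=.
under eq_bigr do rewrite /Mstar mulr_natr mulrb.
rewrite -big_mkcondr; case: (boolP (tle u t)) => [ut | nut]; first exact: sum_mu_interval.
rewrite big1; last by move=> s /andP [us st]; case/negP: nut; apply: tle_trans st.
by case: eqP nut => // ->; rewrite tle_refl.
Qed.

Lemma Mbasis_separating f : (forall x, pairing f (Mbasis x) = 0) -> forall s, f s = 0.
Proof.
move=> f_perp; apply: tamari_down_ind => x IH; have := f_perp x.
rewrite pairing_Mbasis big1 ?addr0 // => s /andP [xs nsx].
by rewrite IH ?mulr0.
Qed.

Lemma Mdual_Mstar Ms : Mdual Ms -> forall t s, Ms t s = Mstar t s.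
Proof.
move=> Ms_dual t s; apply/eqP; rewrite -subr_eq0; apply/eqP; move: s.
by apply: Mbasis_separating => x; rewrite pairingB Ms_dual Mstar_dual subrr.
Qed.

Lemma LRmul_Mstar s t u : LRmul (Mstar s) (Mstar t) u = Mstar (under s t) u.
Proof.
have left_size i : (i < (nodes u).+1)%N -> tle (tsplit u i).1 s -> i = nodes s.
  by move=> iu /tle_nodes; rewrite nodes_tsplit1.
rewrite /LRmul /Mstar; case: (leqP (nodes s) (nodes u)) => [su | us]; last first.
  rewrite big1; first by case: (boolP (tle u _)) => // /tle_nodes; rewrite nodes_under; lia.
  move=> i _; case: (boolP (tle _ s)) => [/(left_size _ (ltn_ord i)) | _]; last by rewrite mul0r.
  by have := ltn_ord i; lia.
rewrite (bigD1 (Ordinal (su : (nodes s < (nodes u).+1)%N))) //= big1 ?addr0.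
  by rewrite -natrM mulnb tle_under.
move=> i ni; case: (boolP (tle _ s)) => [/(left_size _ (ltn_ord i)) ei | _]; last by rewrite mul0r.
by case/eqP: ni; apply: val_inj.
Qed.

Lemma Mstar_Leaf : Mstar Leaf =1 LRone.
Proof. by move=> s; rewrite /Mstar /LRone tle_leaf; case: eqP. Qed.

Definition word_tree (w : seq tree) : tree := foldr under Leaf w.

Fixpoint prog_factors (t : tree) : seq tree :=
  if t is Node l r then Node l Leaf :: prog_factors r else [::].

Lemma prog_factorsK t : word_tree (prog_factors t) = t.
Proof. by elim: t => //= l _ r IH; rewrite -/(word_tree _) IH. Qed.

Lemma prog_factors_progressive t : all progressive (prog_factors t).
Proof. by elim: t => //= l _ r ->. Qed.

Lemma word_tree_inj w w' : all progressive w -> all progressive w' ->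
  word_tree w = word_tree w' -> w = w'.
Proof.
elim: w w' => [|x w IH] [|x' w'] //=; try by case: x' => // ? [].
  by case: x => // ? [].
case: x => // l []//; case: x' => // l' []// /andP [_ pw] /andP [_ pw'] [-> ew].
by rewrite (IH w').
Qed.

Lemma monomial_Mstar Ms : Mdual Ms -> forall w s, monomial Ms w s = Mstar (word_tree w) s.
Proof.
move=> Ms_dual; elim=> [|t w IH] s; first by rewrite Mstar_Leaf.
rewrite /= -LRmul_Mstar /LRmul; apply: eq_bigr => i _.
by rewrite IH Mdual_Mstar.
Qed.

Lemma big_delta_seq (R : pzSemiRingType) (I : eqType) (r : seq I) (d : I -> R) j :
  uniq r -> \sum_(i <- r) d i * (i == j)%:R = if j \in r then d j else 0.
Proof.
move=> ur; case: ifP => jr; first rewrite (bigD1_seq j) //= eqxx mulr1.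
  by rewrite big1 ?addr0 // => i /negbTE ->; rewrite mulr0.
by rewrite big_seq big1 // => i ir; case: eqP ir => [-> | _]; rewrite ?jr ?mulr0.
Qed.

Lemma Mstar_words_free (ws : seq (seq tree)) (c : seq tree -> rat) :
  uniq ws -> all (all progressive) ws ->
  (forall s, \sum_(w <- ws) c w * Mstar (word_tree w) s = 0) ->
  forall w, w \in ws -> c w = 0.
Proof.
move=> uws pws comb0 w0 w0ws.
have : pairing (fun s => \sum_(w <- ws) c w * Mstar (word_tree w) s)
               (Mbasis (word_tree w0)) = 0.
  by rewrite /pairing big1 // => p _; rewrite comb0 mulr0.
rewrite pairing_sum big_seq (eq_bigr (fun w => c w * (w == w0)%:R)).
  by rewrite -big_seq big_delta_seq // w0ws.
have inj_ws : {in ws &, injective word_tree}.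
  by move=> w w' /(allP pws) pw /(allP pws); apply: word_tree_inj.
by move=> w wws; rewrite Mstar_dual (inj_in_eq inj_ws).
Qed.

Definition trees_upto n := flatten [seq trees k | k <- iota 0 n.+1].

Lemma mem_trees_upto n x : (x \in trees_upto n) = (nodes x <= n)%N.
Proof.
apply/flatten_mapP/idP => [[k] | xn]; first by rewrite mem_iota mem_trees => ? /eqP ->; lia.
by exists (nodes x); rewrite ?mem_iota ?mem_trees //; lia.
Qed.

Lemma trees_upto_uniq n : uniq (trees_upto n).
Proof.
apply: (@uniq_flatten_key _ _ nodes) => [i _ | i x]; first exact: trees_uniq.
by rewrite mem_trees => /eqP.
Qed.

Lemma Mstar_expansion f n : (forall s, (n < nodes s)%N -> f s = 0) ->
  forall s, f s = \sum_(x <- trees_upto n) pairing f (Mbasis x) * Mstar x s.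
Proof.
move=> f_supp s; apply/eqP; rewrite -subr_eq0; apply/eqP; move: s.
apply: Mbasis_separating => y; rewrite pairingB pairing_sum.
under eq_bigr do rewrite Mstar_dual.
rewrite big_delta_seq ?trees_upto_uniq // mem_trees_upto.
case: leqP => [_ | ny]; first by rewrite subrr.
rewrite subr0 pairing_Mbasis f_supp // big1 ?addr0 // => s /andP [ys _].
by rewrite f_supp ?mulr0 // (tle_nodes ys).
Qed.

Theorem theorem8p1 :
  (exists Ms : tree -> functional, Mdual Ms) /\
  forall Ms : tree -> functional, Mdual Ms ->
    [/\ (* the words in progressive generators are linearly independent in LR *)
        (forall (ws : seq (seq tree)) (c : seq tree -> rat),
            uniq ws -> all (all progressive) ws ->
            (forall s, \sum_(w <- ws) c w * monomial Ms w s = 0) ->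
            forall w, w \in ws -> c w = 0),
        (* ... and span LR (the finitely supported functionals) *)
        (forall f : functional, finsupp f ->
            exists (ws : seq (seq tree)) (c : seq tree -> rat),
              all (all progressive) ws /\
              forall s, f s = \sum_(w <- ws) c w * monomial Ms w s)
      & (* M*_s M*_t = M*_{s\t} *)
        forall s t u, LRmul (Ms s) (Ms t) u = Ms (under s t) u].
Proof.
split; first by exists Mstar; apply: Mstar_dual.
move=> Ms Ms_dual; split.
- move=> ws c uws pws comb0; apply: Mstar_words_free => // s.
  by rewrite -[RHS](comb0 s); apply: eq_bigr => w _; rewrite monomial_Mstar.
- move=> f [n f_supp].
  exists (map prog_factors (trees_upto n)), (fun w => pairing f (Mbasis (word_tree w))).
  split; first by apply/allP => w /mapP [x _ ->]; apply: prog_factors_progressive.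
  move=> s; rewrite (Mstar_expansion f_supp) big_map; apply: eq_bigr => x _.
  by rewrite monomial_Mstar // prog_factorsK.
- move=> s t u; rewrite Mdual_Mstar // -LRmul_Mstar /LRmul; apply: eq_bigr => i _.
  by rewrite !Mdual_Mstar.
Qed.
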